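(* Let $V$ be a finite set of vertices, let $(V,E)$ be the complete undirected graph on $V$, and let $w:E\to\mathbb{R}$ be arbitrary edge weights (write $w_{ij}=w_{ji}=w(\{i,j\})$). Consider the two $0$--$1$ integer linear programs $$\text{(P)}:\quad \max \sum_{\{i,j\}\in E} w_{ij}x_{ij}\ \text{ s.t. } x_{ij}+x_{jk}\le 1+x_{ik}\ \text{for all distinct } i,j,k\in V,\quad x_{ij}\in\{0,1\}\ \text{for all distinct } i,j\in V,$$ $$\text{(FRP)}:\quad \max \sum_{\{i,j\}\in E} w_{ij}x_{ij}\ \text{ s.t. } x_{ij}+x_{jk}\le 1+x_{ik}\ \text{for all distinct } i,j,k\in V \text{ with } w_{ij}+w_{jk}\ge 0,\quad x_{ij}\in\{0,1\}\ \text{for all distinct } i,j\in V.$$ Then the set of optimal solutions of (FRP) coincides with the set of optimal solutions of (P).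
   Context: Variables are indexed by unordered pairs of distinct vertices, i.e. $x_{ij}$ and $x_{ji}$ denote the same variable, one for each edge $\{i,j\}\in E$. The constraints $x_{ij}+x_{jk}\le 1+x_{ik}$ (transitivity constraints) are imposed for every ordered triple of distinct vertices satisfying the stated condition. Problem (P) is the standard formulation of the clique partitioning problem, whose feasible solutions are exactly the incidence vectors of edge sets of vertex partitions of $V$ into cliques. *)

From HB Require Import structures.
From mathcomp Require Import all_boot all_order all_algebra.
Set Implicit Arguments. Unset Strict Implicit. Unset Printing Implicit Defensive.
Import Order.TTheory GRing.Theory Num.Theory.
Local Open Scope ring_scope.

Definition cedges (V : finType) : {set {set V}} := [set e : {set V} | #|e| == 2%N].

(* A 0-1 solution vector x indexed by edges is represented by its support
   S \subset cedges V ;  x_{ij} = 1 iff {i,j} \in S. *)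
Definition xv (R : realFieldType) (V : finType) (S : {set {set V}}) (i j : V) : R :=
  ([set i; j] \in S)%:R.

Definition tri_ok (R : realFieldType) (V : finType) (S : {set {set V}}) (i j k : V) : Prop :=
  xv R S i j + xv R S j k <= 1 + xv R S i k.

(* Objective  sum_{e in E} w_e x_e ; w : {set V} -> R is only used on edges. *)
Definition obj (R : realFieldType) (V : finType) (w : {set V} -> R) (S : {set {set V}}) : R :=
  \sum_(e in cedges V) w e * (e \in S)%:R.

Definition feasP (R : realFieldType) (V : finType) (S : {set {set V}}) : Prop :=
  S \subset cedges V /\
  forall i j k : V, i != j -> j != k -> i != k -> tri_ok R S i j k.

Definition feasFRP (R : realFieldType) (V : finType) (w : {set V} -> R)
  (S : {set {set V}}) : Prop :=
  S \subset cedges V /\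
  forall i j k : V, i != j -> j != k -> i != k ->
    0 <= w [set i; j] + w [set j; k] -> tri_ok R S i j k.

Definition optimal (R : realFieldType) (V : finType) (feas : {set {set V}} -> Prop)
  (f : {set {set V}} -> R) (S : {set {set V}}) : Prop :=
  feas S /\ forall S', feas S' -> f S' <= f S.

From HB Require Import structures.
From mathcomp Require Import all_boot all_order all_algebra.
From mathcomp Require Import lra.
Import Order.TTheory GRing.Theory Num.Theory.
Local Open Scope ring_scope.
Set Implicit Arguments. Unset Strict Implicit.

(* A 0-1 solution is feasible for (P) iff it has no wedge: a path x - u - v of
   chosen edges with x <> v and {x, v} not chosen.  If S is feasible for (FRP),
   every wedge has w_xu + w_uv < 0.  Removing from S the edges that cross the
   closed neighbourhood N(x) of a vertex x loses exactly the edges {u, v} of the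
   wedges x - u - v, keeps (FRP)-feasibility and makes S smaller.  Summing these
   losses over x and symmetrising x <-> v, twice the total loss equals the sum of
   w_xu + w_uv over all wedges, which is negative as soon as S has a wedge.  So an
   (FRP)-feasible solution with a wedge is strictly improved by some neighbourhood
   cut: (FRP)-optimal solutions are (P)-feasible, and by induction on |S| every
   (FRP)-feasible solution is dominated by a (P)-feasible one. *)

Section NeighbourhoodCuts.
Variable V : finType.
Implicit Types (S E : {set {set V}}) (X : {set V}).

Definition crossing X (e : {set V}) : bool := ~~ (e \subset X) && ~~ (e \subset ~: X).

Definition remove_cut S X : {set {set V}} := [set e in S | ~~ crossing X e].

Definition nbhd S (x : V) : {set V} := [set y | (y == x) || ([set x; y] \in S)].

Definition wedge S (x u v : V) : bool :=
  [&& [set x; u] \in S, [set u; v] \in S, [set x; v] \notin S & x != v].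

Lemma crossing2 X (a b : V) : crossing X [set a; b] = ((a \in X) != (b \in X)).
Proof. by rewrite /crossing !subUset !sub1set !inE; case: (a \in X); case: (b \in X). Qed.

Lemma pair_in_cedges (a b : V) : ([set a; b] \in cedges V) = (a != b).
Proof. by rewrite inE cards2; case: (a != b). Qed.

Lemma edge_neq S (a b : V) : S \subset cedges V -> [set a; b] \in S -> a != b.
Proof. by move=> /subsetP sub_SE /sub_SE; rewrite pair_in_cedges. Qed.

Lemma remove_cut_sub S X : remove_cut S X \subset S.
Proof. by apply/subsetP => e; rewrite inE => /andP[]. Qed.

Lemma wedgeC S (x u v : V) : wedge S x u v = wedge S v u x.
Proof.
rewrite /wedge [[set x; u]]setUC [[set u; v]]setUC [[set x; v]]setUC eq_sym.
by case: ([set u; x] \in S); case: ([set v; u] \in S).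
Qed.

Lemma wedge_nbhd S (x u v : V) : S \subset cedges V ->
  [&& u \in nbhd S x, v \notin nbhd S x & [set u; v] \in S] = wedge S x u v.
Proof.
move=> sub_SE; rewrite /wedge !inE.
have [->|neq_ux] := eqVneq u x.
  have loop_x : [set x; x] \notin S by apply/negP => /(edge_neq sub_SE); rewrite eqxx.
  by rewrite (negbTE loop_x) /=; case: ([set x; v] \in S); rewrite ?orbT ?andbF.
by rewrite (eq_sym x v); case: ([set x; u] \in S); case: ([set u; v] \in S);
  case: ([set x; v] \in S); case: (v == x).
Qed.

Lemma sum_crossing (M : nmodType) E X (F : {set V} -> M) : E \subset cedges V ->
  \sum_(e in E | crossing X e) F e =
  \sum_(p : V * V | [&& p.1 \in X, p.2 \notin X & [set p.1; p.2] \in E]) F [set p.1; p.2].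
Proof.
move=> sub_EE.
set A := [set p : V * V | [&& p.1 \in X, p.2 \notin X & [set p.1; p.2] \in E]].
have inj_pair : {in A &, injective (fun p : V * V => [set p.1; p.2])}.
  move=> [a b] [a' b']; rewrite !inE /= => /and3P[aX bX _] /and3P[a'X b'X _] eq_ab.
  have : a \in [set a'; b'] by rewrite -eq_ab set21.
  have : b \in [set a'; b'] by rewrite -eq_ab set22.
  rewrite !inE => /orP[/eqP eq_b|/eqP->]; first by rewrite eq_b a'X in bX.
  by case/orP => [/eqP->|/eqP eq_a] //; rewrite eq_a in aX; rewrite aX in b'X.
have -> : \sum_(e in E | crossing X e) F e =
          \sum_(e in (fun p : V * V => [set p.1; p.2]) @: A) F e.
  apply: eq_bigl => e; apply/andP/imsetP => [[eE cross_e]|[[a b]]].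
    have : e \in cedges V by exact: (subsetP sub_EE).
    rewrite inE => /cards2P[a [b [_ eq_e]]].
    move: eE cross_e; rewrite eq_e crossing2 => eE.
    case aX: (a \in X) => /= bX.
      by exists (a, b); rewrite // inE /= aX bX eE.
    by exists (b, a); rewrite 1?setUC // inE /= aX setUC eE !andbT; case: (b \in X) bX.
  by rewrite inE /= => /and3P[aX bX abE] ->; rewrite abE crossing2 aX.
by rewrite big_imset //; apply: eq_bigl => p; rewrite inE.
Qed.

End NeighbourhoodCuts.

Lemma tri_okP (R : realFieldType) (V : finType) (S : {set {set V}}) (i j k : V) :
  tri_ok R S i j k <-> (([set i; j] \in S) && ([set j; k] \in S) ==> ([set i; k] \in S)).
Proof.
rewrite /tri_ok /xv.
by case: ([set i; j] \in S); case: ([set j; k] \in S); case: ([set i; k] \in S);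
  split => //= ?; lra.
Qed.

Section Objective.
Variables (R : realFieldType) (V : finType) (w : {set V} -> R).
Implicit Types (S : {set {set V}}) (X : {set V}).

Lemma tri_ok_remove_cut S X (i j k : V) :
  tri_ok R S i j k -> tri_ok R (remove_cut S X) i j k.
Proof.
rewrite !tri_okP !inE !crossing2.
by case: ([set i; j] \in S); case: ([set j; k] \in S); case: ([set i; k] \in S);
  case: (i \in X); case: (j \in X); case: (k \in X).
Qed.

Lemma feasFRP_remove_cut S X : feasFRP w S -> feasFRP w (remove_cut S X).
Proof.
move=> [sub_SE triS]; split; first exact: subset_trans (remove_cut_sub S X) sub_SE.
by move=> i j k ij jk ik w_ge0; apply/tri_ok_remove_cut/triS.
Qed.

Lemma feasP_feasFRP S : feasP R S -> feasFRP w S.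
Proof. by move=> [sub_SE triS]; split=> // i j k ij jk ik _; apply: triS. Qed.

Lemma feasP_wedge_free S :
  S \subset cedges V -> (forall x u v, ~~ wedge S x u v) -> feasP R S.
Proof.
move=> sub_SE no_wedge; split=> // i j k _ _ ik; apply/tri_okP/implyP => /andP[ijS jkS].
by apply/negPn/negP => ikS; have := no_wedge i j k; rewrite /wedge ijS jkS ikS ik.
Qed.

Lemma feasFRP_wedge_weight S (x u v : V) :
  feasFRP w S -> wedge S x u v -> w [set x; u] + w [set u; v] < 0.
Proof.
move=> [sub_SE triS] /and4P[xuS uvS xvS xv]; rewrite ltNge; apply/negP => w_ge0.
have /tri_okP := triS x u v (edge_neq sub_SE xuS) (edge_neq sub_SE uvS) xv w_ge0.
by rewrite xuS uvS (negbTE xvS).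
Qed.

Lemma objE S : S \subset cedges V -> obj w S = \sum_(e in S) w e.
Proof.
move=> /subsetP sub_SE; rewrite /obj big_mkcond [RHS]big_mkcond.
apply: eq_bigr => e _; case: (boolP (e \in S)) => [eS|_]; last by rewrite mulr0 if_same.
by rewrite sub_SE // mulr1.
Qed.

Lemma obj_remove_cut S X : S \subset cedges V ->
  obj w S - obj w (remove_cut S X) = \sum_(e in S | crossing X e) w e.
Proof.
move=> sub_SE; have sub_cut := subset_trans (remove_cut_sub S X) sub_SE.
rewrite !objE //.
have -> : \sum_(e in remove_cut S X) w e = \sum_(e in S | ~~ crossing X e) w e.
  by apply: eq_bigl => e; rewrite inE.
by rewrite (bigID (crossing X)) addrK.
Qed.

Lemma gain_nbhd S (x : V) : S \subset cedges V ->
  obj w S - obj w (remove_cut S (nbhd S x)) =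
  \sum_(p : V * V | wedge S x p.1 p.2) w [set p.1; p.2].
Proof.
move=> sub_SE; rewrite obj_remove_cut // sum_crossing //.
by apply: eq_bigl => p; rewrite wedge_nbhd.
Qed.

Lemma sum_gain_nbhd S : S \subset cedges V ->
  (\sum_x (obj w S - obj w (remove_cut S (nbhd S x)))) *+ 2 =
  \sum_(t : V * (V * V) | wedge S t.1 t.2.1 t.2.2) (w [set t.1; t.2.1] + w [set t.2.1; t.2.2]).
Proof.
move=> sub_SE.
under eq_bigr => x _ do rewrite gain_nbhd //.
rewrite pair_big_dep /= big_split /= addrC mulr2n; congr (_ + _).
have swap_xv : involutive (fun t : V * (V * V) => (t.2.2, (t.2.1, t.1))) by case=> ? [].
rewrite (reindex_inj (inv_inj swap_xv)) /=.
by apply: eq_big => [t|t _]; [rewrite wedgeC | rewrite setUC].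
Qed.

Lemma nbhd_cut_improves S (x u v : V) : feasFRP w S -> wedge S x u v ->
  exists y, obj w S < obj w (remove_cut S (nbhd S y)).
Proof.
move=> FS wedge_xuv.
have [y gain|no_gain] := pickP (fun y => obj w S < obj w (remove_cut S (nbhd S y))).
  by exists y.
have gain_ge0 : 0 <= (\sum_y (obj w S - obj w (remove_cut S (nbhd S y)))) *+ 2.
  by rewrite mulrn_wge0 // sumr_ge0 // => y _; rewrite subr_ge0 leNgt no_gain.
have some_wedge : has (fun t : V * (V * V) => wedge S t.1 t.2.1 t.2.2) (index_enum _).
  by apply/hasP; exists (x, (u, v)); rewrite ?mem_index_enum.
move: gain_ge0; rewrite sum_gain_nbhd; last exact: FS.1.
rewrite leNgt => /negP[].
rewrite (lt_le_trans (ltr_sum (G := fun=> 0) some_wedge _)) ?big1_eq //.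
by move=> t /(feasFRP_wedge_weight FS).
Qed.

Lemma feasFRP_improve S : feasFRP w S -> feasP R S \/
  exists S1, [/\ feasFRP w S1, S1 \proper S & obj w S < obj w S1].
Proof.
move=> FS.
have [[x [u v]] wedge_xuv|no_wedge] := pickP (fun t : V * (V * V) => wedge S t.1 t.2.1 t.2.2).
  right; have [y gain] := nbhd_cut_improves FS wedge_xuv.
  exists (remove_cut S (nbhd S y)); split=> //; first exact: feasFRP_remove_cut.
  rewrite properEneq remove_cut_sub andbT.
  by apply: contraTneq gain => ->; rewrite ltxx.
by left; apply: feasP_wedge_free FS.1 _ => x u v; apply/negbT/(no_wedge (x, (u, v))).
Qed.

Lemma feasFRP_dominated S : feasFRP w S -> exists2 S', feasP R S' & obj w S <= obj w S'.
Proof.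
have [n] := ubnP #|S|; elim: n S => // n IH S ltSn FS.
have [PS|[S1 [FS1 ltS1 gain]]] := feasFRP_improve FS; first by exists S.
have [S' PS' le_S1S'] := IH S1 (leq_trans (proper_card ltS1) ltSn) FS1.
by exists S' => //; apply: le_trans (ltW gain) le_S1S'.
Qed.

End Objective.

Unset Implicit Arguments.

Theorem theorem1 (R : realFieldType) (V : finType) (w : {set V} -> R)
  (S : {set {set V}}) :
  optimal (feasFRP w) (obj w) S <-> optimal (@feasP R V) (obj w) S.
Proof.
split=> [[FS S_max]|[PS S_max]].
  have [PS|[S1 [FS1 _ gain]]] := feasFRP_improve FS; last first.
    by have := S_max _ FS1; rewrite leNgt gain.
  by split=> // S' /(feasP_feasFRP w); apply: S_max.
split=> [|S' FS']; first exact: feasP_feasFRP.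
have [S'' PS'' le_S'S''] := feasFRP_dominated FS'.
exact: le_trans le_S'S'' (S_max _ PS'').
Qed.
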